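(* Under the setting below (in which $\mathbb{P}(X_{0:t}(a_{1:t})\in B_{0:t})>0$ and $\mathbb{P}(\underline y\le Y(a_{1:t})\le\overline y\mid X_{0:t}(a_{1:t})\in B_{0:t})=1$), there exist potential outcomes $(\tilde X_{0:T}(a'_{1:T}),\tilde Y(a'_{1:t}):a'_{1:T}\in\mathcal{A}_{1:T})$, also satisfying $\mathbb{P}(\underline y\le\tilde Y(a_{1:t})\le\overline y\mid\tilde X_{0:t}(a_{1:t})\in B_{0:t})=1$, with $$(\tilde X_{0:T}(A_{1:T}),\tilde Y(A_{1:t}),A_{1:T})=(X_{0:T}(A_{1:T}),Y(A_{1:t}),A_{1:T})\quad\text{almost surely},$$ but for which $\mathbb{E}[\tilde Y(a_{1:t})\mid\tilde X_{0:t}(a_{1:t})\in B_{0:t}]=\mathbb{E}[\underline Y\mid X_{0:N}(A_{1:N})\in B_{0:N}]$. The corresponding statement with $\overline Y$ in place of $\underline Y$ also holds.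
   Context: Horizon $T\ge1$, $\mathcal{X}_t=\mathbb{R}^{d_t}$, finite action spaces $\mathcal{A}_t$; potential outcomes $X_0$, $X_t(a_{1:t})\in\mathcal{X}_t$, random actions $A_{1:T}$, real-valued potential outcomes $Y(a_{1:t})$ defined jointly; $X_{0:t}(a_{1:t})=(X_0,X_1(a_1),\dots,X_t(a_{1:t}))$. Fixed $t\in\{1,\dots,T\}$, $a_{1:t}\in\mathcal{A}_{1:t}$, measurable $B_{0:t}=B_0\times\cdots\times B_t$, $\underline y,\overline y\in\mathbb{R}$. $N=\max\{0\le s\le t:A_{1:s}=a_{1:s}\}$; $\underline Y=\mathbb{1}(A_{1:t}=a_{1:t})Y(A_{1:t})+\mathbb{1}(A_{1:t}\ne a_{1:t})\underline y$, $\overline Y$ likewise with $\overline y$. Quantities evaluated at random actions denote the potential outcome indexed by the realized actions. *)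

From mathcomp Require Import all_boot all_order all_algebra.
From mathcomp Require Import all_classical all_reals all_analysis.
Import Order.TTheory GRing.Theory Num.Theory.
Import numFieldNormedType.Exports.
Set Implicit Arguments. Unset Strict Implicit. Unset Printing Implicit Defensive.
Local Open Scope classical_set_scope.
Local Open Scope ring_scope.

Section Defs.
Context {R : realType} {dΩ : measure_display} {Ω : measurableType dΩ}.

Definition borelRn (n : nat) (B : set 'rV[R]_n) : Prop :=
  <<s [set U : set 'rV[R]_n | open U] >> B.

Definition rvec (n : nat) (f : Ω -> 'rV[R]_n) : Prop :=
  forall B, borelRn B -> measurable (f @^-1` B).

(** Action sequences: (a_s)_s with a_s in Act s; only a_1,...,a_T matter. *)
Definition hist (Act : nat -> finType) := forall s : nat, Act s.

Definition agree (Act : nat -> finType) (s : nat) (a a' : hist Act) : bool :=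
  [forall i : 'I_s, a i.+1 == a' i.+1].

Definition real_hist (Act : nat -> finType) (A : forall s, Ω -> Act s) (w : Ω)
  : hist Act := fun s => A s w.

Definition condprob (P : probability Ω R) (F E : set Ω) : R :=
  fine (P (F `&` E)) / fine (P E).

Definition condexp (P : probability Ω R) (f : Ω -> R) (E : set Ω) : \bar R :=
  ((\int[P]_(w in E) (f w)%:E) * ((fine (P E))^-1)%:E)%E.

Definition Xin (Act : nat -> finType) (dim : nat -> nat)
  (X : forall s : nat, hist Act -> Ω -> 'rV[R]_(dim s))
  (B : forall s : nat, set 'rV[R]_(dim s)) (s : nat) (a : hist Act) : set Ω :=
  [set w | forall i, (i <= s)%N -> B i (X i a w)].

Definition Nidx (Act : nat -> finType) (A : forall s, Ω -> Act s) (t : nat)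
  (a : hist Act) (w : Ω) : nat :=
  \max_(s < t.+1 | agree s (real_hist A w) a) (s : nat).

Definition XNin (Act : nat -> finType) (dim : nat -> nat)
  (X : forall s : nat, hist Act -> Ω -> 'rV[R]_(dim s))
  (B : forall s : nat, set 'rV[R]_(dim s)) (A : forall s, Ω -> Act s)
  (t : nat) (a : hist Act) : set Ω :=
  [set w | forall i, (i <= Nidx A t a w)%N -> B i (X i (real_hist A w) w)].

Definition Ybound (Act : nat -> finType) (Y : hist Act -> Ω -> R)
  (A : forall s, Ω -> Act s) (t : nat) (a : hist Act) (c : R) (w : Ω) : R :=
  if agree t (real_hist A w) a then Y (real_hist A w) w else c.

Definition potential_outcomes (Act : nat -> finType) (dim : nat -> nat) (T t : nat)
  (X : forall s : nat, hist Act -> Ω -> 'rV[R]_(dim s))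
  (Y : hist Act -> Ω -> R) : Prop :=
  (forall s a a', (s <= T)%N -> agree s a a' -> X s a = X s a') /\
  (forall a a', agree t a a' -> Y a = Y a') /\
  (forall s a, (s <= T)%N -> rvec (X s a)) /\
  (forall a, measurable_fun setT (Y a)).

Definition sharp_witness (P : probability Ω R) (Act : nat -> finType)
  (dim : nat -> nat) (T t : nat)
  (X : forall s : nat, hist Act -> Ω -> 'rV[R]_(dim s)) (Y : hist Act -> Ω -> R)
  (A : forall s, Ω -> Act s) (a : hist Act)
  (B : forall s : nat, set 'rV[R]_(dim s)) (ylo yhi c : R) : Prop :=
  exists (Xt : forall s : nat, hist Act -> Ω -> 'rV[R]_(dim s))
         (Yt : hist Act -> Ω -> R),
    potential_outcomes T t Xt Yt /\
    condprob P [set w | ylo <= Yt a w <= yhi] (Xin Xt B t a) = 1 /\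
    {ae P, forall w,
       (forall s, (s <= T)%N ->
          Xt s (real_hist A w) w = X s (real_hist A w) w) /\
       Yt (real_hist A w) w = Y (real_hist A w) w} /\
    condexp P (Yt a) (Xin Xt B t a)
      = condexp P (Ybound Y A t a c) (XNin X B A t a).

End Defs.

From mathcomp Require Import all_boot all_order all_algebra.
From mathcomp Require Import all_classical all_reals all_analysis.
From mathcomp Require Import lra.
Import Order.TTheory GRing.Theory Num.Theory.
Set Implicit Arguments.
Unset Strict Implicit.
Unset Printing Implicit Defensive.
Local Open Scope classical_set_scope.
Local Open Scope ring_scope.

(* The data (X(A), Y(A), A) only see the potential outcomes along the realized
   action path, so they may be redefined freely off it.  Fix w0 with
   X_{0:t}(a)(w0) in B_{0:t} and a bound c in [ylo, yhi]; let X~_s(a') be X_s(a')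
   on {A_{1:s} = a'_{1:s}} and the constant X_s(a)(w0) elsewhere, and Y~(a') be
   Y(a') on {A_{1:t} = a'_{1:t}} and c elsewhere.  Then X~(A) = X(A) and
   Y~(A) = Y(A) identically, {X~_{0:t}(a) in B_{0:t}} = {X_{0:N}(A_{1:N}) in B_{0:N}}
   and Y~(a) = 1(A_{1:t} = a_{1:t}) Y(A_{1:t}) + 1(A_{1:t} <> a_{1:t}) c.  The new
   conditioning event only gains outcomes on which Y~(a) = c lies in [ylo, yhi],
   so the bounds still hold with conditional probability one. *)

Section agree.
Variable Act : nat -> finType.
Implicit Types a b c : hist Act.

Lemma agreeP s a b : reflect (forall i, (i < s)%N -> a i.+1 = b i.+1) (agree s a b).
Proof.
apply: (iffP forallP) => [h i lis | h i]; first exact/eqP/(h (Ordinal lis)).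
exact/eqP/h.
Qed.

Lemma agree_refl s a : agree s a a.
Proof. exact/agreeP. Qed.

Lemma agree_sym s a b : agree s a b -> agree s b a.
Proof. by move/agreeP=> h; apply/agreeP=> i /h ->. Qed.

Lemma agree_trans s a b c : agree s a b -> agree s b c -> agree s a c.
Proof. by move=> /agreeP h1 /agreeP h2; apply/agreeP=> i lis; rewrite h1 ?h2. Qed.

Lemma agree_le i s a b : (i <= s)%N -> agree s a b -> agree i a b.
Proof. by move=> lis /agreeP h; apply/agreeP=> j ltji; apply: h (leq_trans ltji lis). Qed.

Lemma agree_congr_r s a b c : agree s b c -> agree s a b = agree s a c.
Proof.
move=> bc; apply/idP/idP => [ab | ac]; first exact: agree_trans ab bc.
exact: agree_trans ac (agree_sym bc).
Qed.

End agree.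

Section conditional_probability.
Context {R : realType} {dΩ : measure_display} {Ω : measurableType dΩ}.
Variable P : probability Ω R.

Lemma condprob_eq1P (F E : set Ω) : measurable E -> measurable F -> (0 < P E)%E ->
  condprob P F E = 1 <-> P (E `\` F) = 0.
Proof.
move=> mE mF PE_gt0.
have fin S : measurable S -> P S = (fine (P S))%:E.
  by move=> mS; rewrite fineK ?fin_num_measure.
have splitE : fine (P E) = fine (P (E `\` F)) + fine (P (E `&` F)).
  have splitP : P E = (P (E `\` F) + P (E `&` F))%E := measureDI P mE mF.
  by rewrite splitP fineD ?inE ?fin_num_measure //; [exact: measurableD | exact: measurableI].
have PE_neq0 : fine (P E) != 0 by rewrite gt_eqF // -lte_fin -fin.
rewrite /condprob setIC (fin _ (measurableD mE mF)).
split=> [/(congr1 (fun x => x * fine (P E)))|[null]].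
- by rewrite mul1r divfK // splitE => h; congr EFin; lra.
- by rewrite (_ : fine (P (E `&` F)) = fine (P E)) ?divff // splitE null add0r.
Qed.

Lemma condprob_eq1_transfer (F E F' E' : set Ω) :
  measurable E -> measurable F -> measurable E' -> measurable F' -> (0 < P E)%E ->
  E `<=` E' -> E' `\` F' `<=` E `\` F ->
  condprob P F E = 1 -> condprob P F' E' = 1.
Proof.
move=> mE mF mE' mF' PE_gt0 EE' DD' /(condprob_eq1P mE mF PE_gt0) null.
have PE'_gt0 : (0 < P E')%E.
  exact: lt_le_trans PE_gt0 (le_measure P (mem_set mE) (mem_set mE') EE').
apply/condprob_eq1P => //; apply/eqP; rewrite eq_le measure_ge0 andbT -null.
exact: le_measure (mem_set (measurableD mE' mF')) (mem_set (measurableD mE mF)) DD'.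
Qed.

Lemma condprob_between_eq1_le (f : Ω -> R) lo hi (E : set Ω) :
  condprob P [set w | lo <= f w <= hi] E = 1 -> lo <= hi.
Proof.
rewrite leNgt; apply: contraPN => hi_lt_lo.
rewrite (_ : [set w | _] = set0); last first.
  apply/seteqP; split=> w // /andP[lo_le hi_ge].
  by have := le_lt_trans (le_trans lo_le hi_ge) hi_lt_lo; rewrite ltxx.
by rewrite /condprob set0I measure0 mul0r => /eqP; rewrite eq_sym oner_eq0.
Qed.

End conditional_probability.

Section measurability.
Context {R : realType} {dΩ : measure_display} {Ω : measurableType dΩ}.

Lemma measurable_between (f : Ω -> R) lo hi :
  measurable_fun setT f -> measurable [set w | lo <= f w <= hi].
Proof. by move=> mf; have := mf measurableT _ (measurable_itv `[lo, hi]); rewrite setTI. Qed.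

Lemma rvec_if n (e : Ω -> bool) (f : Ω -> 'rV[R]_n) c :
  measurable [set w | e w] -> rvec f -> rvec (fun w => if e w then f w else c).
Proof.
move=> me mf D BD.
rewrite (_ : _ @^-1` D =
    ([set w | e w] `&` f @^-1` D) `|` (~` [set w | e w] `&` cst c @^-1` D)).
  apply: measurableU; apply: measurableI; [exact: me | exact: mf | exact: measurableC |].
  by rewrite preimage_cst; case: ifP.
apply/seteqP; split=> w /=; case: (e w) => /=; [by left | by right | |].
- by case=> [[]|[]].
- by case=> [[]|[]].
Qed.

Lemma measurable_Xin (Act : nat -> finType) (dim : nat -> nat)
  (X : forall s, hist Act -> Ω -> 'rV[R]_(dim s)) (B : forall s, set 'rV[R]_(dim s)) s a :
  (forall i, (i <= s)%N -> measurable (X i a @^-1` B i)) -> measurable (Xin X B s a).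
Proof. exact: bigcap_measurableType. Qed.

End measurability.

Section realized_history.
Context {R : realType} {dΩ : measure_display} {Ω : measurableType dΩ}.
Variables (Act : nat -> finType) (A : forall s, Ω -> Act s).

Lemma Nidx_le t a w : (Nidx A t a w <= t)%N.
Proof. by apply/bigmax_leqP => i _; rewrite -ltnS. Qed.

Lemma Nidx_agree t a w : agree (Nidx A t a w) (real_hist A w) a.
Proof.
apply: (big_ind (fun n => agree n (real_hist A w) a)) => //; first exact/agreeP.
by move=> m n; rewrite /maxn; case: ltnP.
Qed.

Lemma Nidx_max t a w i :
  (i <= t)%N -> agree i (real_hist A w) a -> (i <= Nidx A t a w)%N.
Proof. by move=> lit; apply: (leq_bigmax_cond (Ordinal (lit : (i < t.+1)%N))). Qed.

Lemma measurable_agree_real_hist T s a :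
  (forall s (v : Act s), (1 <= s <= T)%N -> measurable (A s @^-1` [set v])) ->
  (s <= T)%N -> measurable [set w | agree s (real_hist A w) a].
Proof.
move=> mA sT.
rewrite (_ : [set w | _] = \bigcap_(i in [set i | (i < s)%N]) A i.+1 @^-1` [set a i.+1]).
  by apply: bigcap_measurableType => i /= lis; apply: mA; rewrite /= (leq_trans lis sT).
by apply/seteqP; split=> w /=; [move/agreeP | move=> h; apply/agreeP].
Qed.

End realized_history.

Section patching.
Context {R : realType} {dΩ : measure_display} {Ω : measurableType dΩ}.
Variable P : probability Ω R.
Variables (Act : nat -> finType) (dim : nat -> nat) (A : forall s, Ω -> Act s).
Variables (T t : nat) (X : forall s, hist Act -> Ω -> 'rV[R]_(dim s)).
Variable Y : hist Act -> Ω -> R.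
Hypothesis tT : (t <= T)%N.
Hypothesis mA : forall s (v : Act s), (1 <= s <= T)%N -> measurable (A s @^-1` [set v]).
Hypothesis po : potential_outcomes T t X Y.

Definition patch_X (x0 : forall s, 'rV[R]_(dim s)) :
    forall s, hist Act -> Ω -> 'rV[R]_(dim s) :=
  fun s a w => if agree s (real_hist A w) a then X s a w else x0 s.

Definition patch_Y (c : R) : hist Act -> Ω -> R :=
  fun a w => if agree t (real_hist A w) a then Y a w else c.

Lemma potential_outcomes_patch x0 c : potential_outcomes T t (patch_X x0) (patch_Y c).
Proof.
case: po => [Xcons [Ycons [mX mY]]]; split; [|split; [|split]].
- move=> s a b sT ab; apply/funext => w.
  by rewrite /patch_X (Xcons s a b sT ab) (agree_congr_r _ ab).
- by move=> a b ab; apply/funext => w; rewrite /patch_Y (Ycons a b ab) (agree_congr_r _ ab).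
- by move=> s a sT; apply: rvec_if (measurable_agree_real_hist a mA sT) (mX s a sT).
- move=> a; apply: measurable_fun_ifT => //; apply: (measurable_fun_bool true).
  by rewrite setTI; apply: (measurable_agree_real_hist _ mA tT).
Qed.

Lemma Xin_patch_X x0 (B : forall s, set 'rV[R]_(dim s)) a :
  (forall s, (s <= t)%N -> B s (x0 s)) -> Xin (patch_X x0) B t a = XNin X B A t a.
Proof.
case: po => [Xcons _] Bx0; apply/seteqP; split=> w /= h i.
- move=> leiN; have ag := agree_le leiN (Nidx_agree A t a w).
  have leit := leq_trans leiN (Nidx_le A t a w).
  rewrite (Xcons i _ _ (leq_trans leit tT) ag).
  by have := h i leit; rewrite /patch_X ag.
- move=> leit; rewrite /patch_X; case: ifP => ag; last exact: Bx0.
  by rewrite -(Xcons i _ _ (leq_trans leit tT) ag); apply: h (Nidx_max leit ag).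
Qed.

Lemma patch_Y_Ybound c a : patch_Y c a = Ybound Y A t a c.
Proof.
case: po => [_ [Ycons _]]; apply/funext => w; rewrite /patch_Y /Ybound.
by case: ifP => // ag; rewrite (Ycons _ _ ag).
Qed.

Lemma condprob_patch x0 c (B : forall s, set 'rV[R]_(dim s)) a ylo yhi :
  (forall s, (s <= t)%N -> borelRn (B s)) -> (forall s, (s <= t)%N -> B s (x0 s)) ->
  (0 < P (Xin X B t a))%E -> ylo <= c <= yhi ->
  condprob P [set w | ylo <= Y a w <= yhi] (Xin X B t a) = 1 ->
  condprob P [set w | ylo <= patch_Y c a w <= yhi] (Xin (patch_X x0) B t a) = 1.
Proof.
move=> mB Bx0 PE_gt0 c_between.
case: (potential_outcomes_patch x0 c) => _ [_ [mXt mYt]]; case: po => _ [_ [mX mY]].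
have mXin (Z : forall s, hist Act -> Ω -> 'rV[R]_(dim s)) :
    (forall s a, (s <= T)%N -> rvec (Z s a)) -> measurable (Xin Z B t a).
  by move=> mZ; apply: measurable_Xin => i leit; apply: mZ (leq_trans leit tT) _ (mB i leit).
apply: (condprob_eq1_transfer (mXin _ mX) (measurable_between ylo yhi (mY a))
  (mXin _ mXt) (measurable_between ylo yhi (mYt a)) PE_gt0).
- move=> w Ew i leit; rewrite /patch_X; case: ifP => _; [exact: Ew | exact: Bx0].
- move=> w [E'w]; rewrite /patch_Y /=; case: ifP => [ag | _]; last by rewrite c_between.
  move=> notF; split => // i leit; have := E'w i leit.
  by rewrite /patch_X (agree_le leit ag).
Qed.

Lemma sharp_witness_patch (B : forall s, set 'rV[R]_(dim s)) a ylo yhi c :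
  (forall s, (s <= t)%N -> borelRn (B s)) -> (0 < P (Xin X B t a))%E -> ylo <= c <= yhi ->
  condprob P [set w | ylo <= Y a w <= yhi] (Xin X B t a) = 1 ->
  sharp_witness P T t X Y A a B ylo yhi c.
Proof.
move=> mB PE_gt0 c_between hcond.
have [w0 Ew0] : Xin X B t a !=set0.
  by apply/set0P; apply: contraTneq PE_gt0 => ->; rewrite measure0 ltxx.
exists (patch_X (fun s => X s a w0)), (patch_Y c); split; [|split; [|split]].
- exact: potential_outcomes_patch.
- exact: condprob_patch.
- by apply: aeW => w; split=> [s _|]; rewrite /patch_X /patch_Y agree_refl.
- by rewrite Xin_patch_X // patch_Y_Ybound.
Qed.

End patching.

Theorem proposition4p6 (R : realType) (dΩ : measure_display)
  (Ω : measurableType dΩ) (P : probability Ω R)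
  (T : nat) (Act : nat -> finType) (dim : nat -> nat)
  (X : forall s : nat, hist Act -> Ω -> 'rV[R]_(dim s))
  (A : forall s : nat, Ω -> Act s)
  (t : nat) (Y : hist Act -> Ω -> R)
  (a : hist Act) (B : forall s : nat, set 'rV[R]_(dim s)) (ylo yhi : R) :
  (1 <= T)%N ->
  (1 <= t <= T)%N ->
  potential_outcomes T t X Y ->
  (forall s (v : Act s), (1 <= s <= T)%N -> measurable (A s @^-1` [set v])) ->
  (forall s, (s <= t)%N -> borelRn (B s)) ->
  (0 < P (Xin X B t a))%E ->
  condprob P [set w | ylo <= Y a w <= yhi] (Xin X B t a) = 1 ->
  sharp_witness P T t X Y A a B ylo yhi ylo /\
  sharp_witness P T t X Y A a B ylo yhi yhi.
Proof.
move=> _ /andP[_ tT] po mA mB PE_gt0 hcond.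
have ylo_le_yhi := condprob_between_eq1_le hcond.
by split; apply: (sharp_witness_patch tT mA po); rewrite ?lexx ?ylo_le_yhi.
Qed.
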